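(* Let $(R,+,\cdot)$ be a finite simple semiring with $|RR|>1$ and $|R|>2$, and let $(M,+)$ be an $R$-semimodule that is faithful of smallest cardinality. Then $(M,+)$ is irreducible.
   Context: A semiring is a nonempty set with a commutative semigroup operation $+$ and a semigroup operation $\cdot$ satisfying both distributive laws; simple if its only congruences are the identity and the full relation. $RR=\{rs: r,s\in R\}$. An $R$-semimodule is a commutative semigroup $(M,+)$ with an action $R\times M\to M$ satisfying $r(sx)=(rs)x$, $(r+s)x=rx+sx$, $r(x+y)=rx+ry$. It is faithful if the map $r\mapsto(x\mapsto rx)$ from $R$ to the endomorphisms of $(M,+)$ is injective; faithful of smallest cardinality if it is faithful and no $R$-semimodule $N$ with $|N|<|M|$ is faithful. A subsemimodule is a subsemigroup closed under the action; a semimodule congruence is an equivalence compatible with $+$ and the action. $M$ is quasitrivial if $rx=sx$ for all $r,s\in R$, $x\in M$; id-quasitrivial if $rx=x$ for all $r,x$. $M$ is sub-irreducible if it is not quasitrivial and all its proper subsemimodules are id-quasitrivial; quotient-irreducible if not quasitrivial and its only congruences are the identity and $M\times M$; irreducible if both. *)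

From mathcomp Require Import all_boot.
Set Implicit Arguments. Unset Strict Implicit. Unset Printing Implicit Defensive.

Definition is_semiring (R : Type) (add mul : R -> R -> R) : Prop :=
  [/\ forall a b c, add a (add b c) = add (add a b) c,
      forall a b, add a b = add b a,
      forall a b c, mul a (mul b c) = mul (mul a b) c,
      forall a b c, mul a (add b c) = add (mul a b) (mul a c)
    & forall a b c, mul (add a b) c = add (mul a c) (mul b c)].

Definition is_equivalence (T : Type) (rel : T -> T -> Prop) : Prop :=
  [/\ forall x, rel x x, forall x y, rel x y -> rel y x
    & forall x y z, rel x y -> rel y z -> rel x z].

Definition semiring_congruence (R : Type) (add mul : R -> R -> R)
    (rel : R -> R -> Prop) : Prop :=
  is_equivalence rel /\
  (forall a b c d, rel a b -> rel c d -> rel (add a c) (add b d) /\ rel (mul a c) (mul b d)).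

Definition simple_semiring (R : Type) (add mul : R -> R -> R) : Prop :=
  forall rel, semiring_congruence add mul rel ->
    (forall x y, rel x y <-> x = y) \/ (forall x y, rel x y).

(* |RR| > 1 : RR = {rs} has two distinct elements *)
Definition RR_nontrivial (R : Type) (mul : R -> R -> R) : Prop :=
  exists a b c d, mul a b <> mul c d.

Definition is_semimodule (R M : Type) (add mul : R -> R -> R)
    (addM : M -> M -> M) (act : R -> M -> M) : Prop :=
  [/\ forall x y z, addM x (addM y z) = addM (addM x y) z,
      forall x y, addM x y = addM y x,
      forall r s x, act r (act s x) = act (mul r s) x,
      forall r s x, act (add r s) x = addM (act r x) (act s x)
    & forall r x y, act r (addM x y) = addM (act r x) (act r y)].

Definition faithful (R M : Type) (act : R -> M -> M) : Prop :=
  forall r s, (forall x, act r x = act s x) -> r = s.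

(* faithful of smallest cardinality (among finite semimodules; any N with
   |N| < |M| for finite M is finite) *)
Definition faithful_smallest (R : Type) (add mul : R -> R -> R)
    (M : finType) (addM : M -> M -> M) (act : R -> M -> M) : Prop :=
  faithful act /\
  forall (N : finType) (addN : N -> N -> N) (actN : R -> N -> N),
    is_semimodule add mul addN actN -> faithful actN -> #|M| <= #|N|.

Definition quasitrivial (R M : Type) (act : R -> M -> M) : Prop :=
  forall r s x, act r x = act s x.

Definition subsemimodule (R M : Type) (addM : M -> M -> M) (act : R -> M -> M)
    (S : M -> Prop) : Prop :=
  [/\ exists x, S x,
      forall x y, S x -> S y -> S (addM x y)
    & forall r x, S x -> S (act r x)].

Definition sub_irreducible (R M : Type) (addM : M -> M -> M) (act : R -> M -> M) : Prop :=
  ~ quasitrivial act /\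
  forall S : M -> Prop, subsemimodule addM act S -> (exists x, ~ S x) ->
    forall r x, S x -> act r x = x.

Definition semimodule_congruence (R M : Type) (addM : M -> M -> M) (act : R -> M -> M)
    (rel : M -> M -> Prop) : Prop :=
  is_equivalence rel /\
  (forall x y z w, rel x y -> rel z w -> rel (addM x z) (addM y w)) /\
  (forall r x y, rel x y -> rel (act r x) (act r y)).

Definition quotient_irreducible (R M : Type) (addM : M -> M -> M) (act : R -> M -> M) : Prop :=
  ~ quasitrivial act /\
  forall rel, semimodule_congruence addM act rel ->
    (forall x y, rel x y <-> x = y) \/ (forall x y, rel x y).

Definition irreducible (R M : Type) (addM : M -> M -> M) (act : R -> M -> M) : Prop :=
  sub_irreducible addM act /\ quotient_irreducible addM act.

(* Since R is simple, the kernel of the action on any R-semimodule is trivial or total,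
   so every semimodule is faithful or quasitrivial; as M is a smallest faithful one, its
   proper subsemimodules and proper quotients are quasitrivial.  A simple semiring whose
   multiplication is a projection, or constant in its second argument, has at most two
   elements (when |RR| > 1), and this is how |R| > 2 is used.
   - The action separates the points of M: otherwise the quotient by "rx = ry for all r"
     is quasitrivial and faithfulness makes t r = t s for all t, r, s.
   - Hence on a proper subsemimodule S, t (r x) = t x for all t gives r x = x.
   - For a nontrivial congruence ~, the x with r x ~ x for all r form a subsemimodule
     containing RM; were it proper, R would fix RM and rs = s would follow.  So r x ~ x,
     every class is a subsemimodule, and if ~ were not total all classes would be proper,
     all of M fixed, and M quasitrivial, contradicting faithfulness. *)

From HB Require Import structures.
From mathcomp Require Import all_boot generic_quotient.
From mathcomp Require Import boolp.
Set Implicit Arguments. Unset Strict Implicit. Unset Printing Implicit Defensive.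
Local Open Scope quotient_scope.

Section SimpleSemiring.

Variables (R : Type) (add mul : R -> R -> R).
Hypothesis simpleR : simple_semiring add mul.

Lemma faithful_or_quasitrivial (M : Type) (addM : M -> M -> M) (act : R -> M -> M) :
  is_semimodule add mul addM act -> faithful act \/ quasitrivial act.
Proof.
move=> [_ _ actA actDl _].
pose ker r s := forall x, act r x = act s x.
have ker_cong : semiring_congruence add mul ker.
  split; first by split=> [r x | r s E x | r s t E F x]; rewrite ?E ?F.
  by move=> a b c d E F; split=> x; rewrite ?actDl -?actA E F.
case: (simpleR ker_cong) => [ker_id | ker_full]; [left | right].
- by move=> r s /ker_id.
- by move=> r s x; apply: ker_full.
Qed.

End SimpleSemiring.

Section FiniteSimpleSemiring.

Variables (R : finType) (add mul : R -> R -> R).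
Hypotheses (semiringR : is_semiring add mul) (simpleR : simple_semiring add mul).

Lemma card_le2_of_projection :
  (forall a b, mul a b = a) \/ (forall a b, mul a b = b) -> #|R| <= 2.
Proof.
have [addA addC _ mulDr mulDl] := semiringR.
move=> mul_proj.
have addss a : add a a = a.
  by case: mul_proj => mulE; [have := mulDr a a a | have := mulDl a a a]; rewrite !mulE.
(* [f a p] says that [p] lies below [a] in the semilattice order of [+]. *)
pose f a p := add p a == a.
have fD a p q : f a (add p q) = f a p && f a q.
  apply/eqP/andP => [pqa | [/eqP pa /eqP qa]]; last by rewrite -addA qa pa.
  split; apply/eqP; rewrite -{1}pqa.
    by rewrite !addA addss.
  by rewrite (addC p q) !addA addss (addC q p).
have f_cong a : semiring_congruence add mul (fun p q => f a p = f a q).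
  split; first by split=> [// | p q -> | p q r -> ->].
  move=> p q r s E F; split; first by rewrite !fD E F.
  by case: mul_proj => mulE; rewrite !mulE.
case: (pselect (forall a p, add p a = a)) => [absorb | /existsNP [a /existsNP [x xa]]].
  have const_inj : injective (fun _ : R => tt).
    by move=> p q _; rewrite -(absorb p q) addC absorb.
  by rewrite (leq_trans (leq_card _ const_inj)) // card_unit.
case: (simpleR (f_cong a)) => [f_id | f_full].
  have f_inj : injective (f a) by move=> p q /f_id.
  by rewrite -card_bool; apply: leq_card f_inj.
by have := f_full x a; rewrite /f addss eqxx => /eqP.
Qed.

Lemma card_le2_of_mul_left_constant :
  (forall t r s, mul t r = mul t s) -> RR_nontrivial mul -> #|R| <= 2.
Proof.
have [_ _ mulA _ mulDl] := semiringR.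
move=> mulK [a [b [c [d mul_neq]]]].
have mulE t r : mul t r = mul t t by apply: mulK.
have sq_cong : semiring_congruence add mul (fun p q => mul p p = mul q q).
  split; first by split=> [// | p q -> | p q r -> ->].
  move=> p q r s E F; split; first by rewrite mulDl mulE (mulE r) mulDl mulE (mulE s) E F.
  by rewrite -!mulA (mulE p) (mulE q).
case: (simpleR sq_cong) => [sq_id | sq_full].
  apply: card_le2_of_projection; left=> t r.
  by rewrite mulE; apply/sq_id; rewrite -mulA mulE.
by case: mul_neq; rewrite mulE (mulE c) (sq_full a c).
Qed.

End FiniteSimpleSemiring.

Lemma card_lt_of_not_codom (T T' : finType) (f : T -> T') y :
  injective f -> y \notin codom f -> #|T| < #|T'|.
Proof. by move=> f_inj; apply: contraNT; rewrite -leqNgt => /(inj_card_onto f_inj). Qed.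

Section Substructures.

Variables (R : Type) (add mul : R -> R -> R).
Variables (M : finType) (addM : M -> M -> M) (act : R -> M -> M).
Hypothesis semimodM : is_semimodule add mul addM act.

Section Subsemimodule.

Variable S : M -> Prop.
Hypotheses (addS : forall x y, S x -> S y -> S (addM x y))
           (actS : forall r x, S x -> S (act r x)).

Definition subsemimodule_type := {x : M | `[< S x >]}.

Definition sub_add (a b : subsemimodule_type) : subsemimodule_type :=
  exist _ (addM (val a) (val b)) (asboolT (addS (asboolW (valP a)) (asboolW (valP b)))).

Definition sub_act r (a : subsemimodule_type) : subsemimodule_type :=
  exist _ (act r (val a)) (asboolT (actS r (asboolW (valP a)))).

Lemma sub_semimodule : is_semimodule add mul sub_add sub_act.
Proof.
have [addMA addMC actA actDl actDr] := semimodM.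
by split=> *; apply: val_inj; rewrite /= ?addMA ?actA ?actDl ?actDr // addMC.
Qed.

Lemma card_sub_lt z : ~ S z -> #|{: subsemimodule_type}| < #|M|.
Proof.
move=> Sz; apply: (card_lt_of_not_codom (y := z) val_inj).
by apply/codomP => -[a za]; apply: Sz; rewrite za; apply: asboolW (valP a).
Qed.

End Subsemimodule.

Section Quotient.

Variable cong : M -> M -> Prop.
Hypothesis congM : semimodule_congruence addM act cong.

Definition congb : rel M := fun x y => `[< cong x y >].

Lemma congb_equiv : equiv_class_of congb.
Proof.
have [[cong_refl cong_sym cong_trans] _] := congM.
split=> [x | x y | x y z]; rewrite /congb.
- exact/asboolP.
- by apply/asboolP/asboolP => /cong_sym.
- by move=> /asboolP xy /asboolP yz; apply/asboolP; apply: cong_trans xy yz.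
Qed.

Definition cong_equiv : equiv_rel M := EquivRelPack congb_equiv.

Definition quotient_type := {eq_quot cong_equiv}.
HB.instance Definition _ := [Finite of quotient_type by <:%/].

Lemma eqmod_cong x y : reflect (cong x y) (x == y %[mod quotient_type]).
Proof. by rewrite eqmodE; apply: asboolP. Qed.

Definition quo_add (a b : quotient_type) : quotient_type :=
  \pi_quotient_type (addM (repr a) (repr b)).

Definition quo_act r (a : quotient_type) : quotient_type := \pi_quotient_type (act r (repr a)).

Lemma cong_repr_pi x : cong (repr (\pi_quotient_type x)) x.
Proof. by apply/eqmod_cong; rewrite reprK. Qed.

Lemma pi_add x y : \pi_quotient_type (addM x y) = quo_add (\pi x) (\pi y).
Proof.
have [[_ cong_sym _] [congD _]] := congM.
rewrite /quo_add; apply/eqP/eqmod_cong; apply: congD; apply: cong_sym; exact: cong_repr_pi.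
Qed.

Lemma pi_act r x : \pi_quotient_type (act r x) = quo_act r (\pi x).
Proof.
have [[_ cong_sym _] [_ congZ]] := congM.
rewrite /quo_act; apply/eqP/eqmod_cong; apply: congZ; apply: cong_sym; exact: cong_repr_pi.
Qed.

Lemma quotient_semimodule : is_semimodule add mul quo_add quo_act.
Proof.
have [addMA addMC actA actDl actDr] := semimodM.
split=> [a b c | a b | r s a | r s a | r a b].
- by elim/quotW: a => a; elim/quotW: b => b; elim/quotW: c => c; rewrite -!pi_add addMA.
- by elim/quotW: a => a; elim/quotW: b => b; rewrite -!pi_add addMC.
- by elim/quotW: a => a; rewrite -!pi_act actA.
- by elim/quotW: a => a; rewrite -!pi_act -pi_add actDl.
- by elim/quotW: a => a; elim/quotW: b => b; rewrite -pi_add -!pi_act -pi_add actDr.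
Qed.

Lemma card_quotient_lt x y : cong x y -> x <> y -> #|{: quotient_type}| < #|M|.
Proof.
move=> xy x_neq_y.
pose rep : quotient_type -> M := repr.
have repr_inj : injective rep := can_inj reprK.
have repr_piE z : z \in codom rep -> rep (\pi_quotient_type z) = z.
  by case/codomP=> a ->; rewrite reprK.
have [/repr_piE x_repr | ] := boolP (x \in codom rep); last exact: card_lt_of_not_codom.
apply: (card_lt_of_not_codom (y := y) repr_inj); apply/negP => /repr_piE y_repr.
have pi_xy : \pi_quotient_type x = \pi y by apply/eqP/eqmod_cong.
by apply: x_neq_y; rewrite -x_repr -y_repr pi_xy.
Qed.

End Quotient.
End Substructures.

Section SmallestFaithful.

Variables (R : Type) (add mul : R -> R -> R).
Variables (M : finType) (addM : M -> M -> M) (act : R -> M -> M).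
Hypotheses (simpleR : simple_semiring add mul) (semimodM : is_semimodule add mul addM act)
           (smallestM : faithful_smallest add mul addM act).

Lemma quasitrivial_of_card_lt (N : finType) (addN : N -> N -> N) (actN : R -> N -> N) :
  is_semimodule add mul addN actN -> #|N| < #|M| -> quasitrivial actN.
Proof.
move=> semimodN ltNM; have [faithN | //] := faithful_or_quasitrivial simpleR semimodN.
by have := smallestM.2 _ _ _ semimodN faithN; rewrite leqNgt ltNM.
Qed.

Lemma proper_subsemimodule_quasitrivial (S : M -> Prop) :
  subsemimodule addM act S -> (exists z, ~ S z) ->
  forall r s x, S x -> act r x = act s x.
Proof.
move=> [_ addS actS] [z Sz] r s x Sx.
have qt := quasitrivial_of_card_lt (sub_semimodule semimodM addS actS) (card_sub_lt Sz).
by have /(congr1 val) := qt r s (exist _ x (asboolT Sx)).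
Qed.

Lemma nontrivial_congruence_quasitrivial (cong : M -> M -> Prop) :
  semimodule_congruence addM act cong -> ~ (forall x y, cong x y <-> x = y) ->
  forall r s x, cong (act r x) (act s x).
Proof.
move=> congM cong_nid.
have [x [y [xy x_neq_y]]] : exists x y, cong x y /\ x <> y.
  apply: contrapT => none; apply: cong_nid => x y; split=> [xy | ->].
    by apply: contrapT => x_neq_y; apply: none; exists x, y.
  by have [[]] := congM.
have qt := quasitrivial_of_card_lt (quotient_semimodule semimodM congM)
                                   (card_quotient_lt congM xy x_neq_y).
move=> r s z; apply/(eqmod_cong congM)/eqP.
by rewrite !(pi_act congM) (qt r s).
Qed.

End SmallestFaithful.

Lemma not_quasitrivial_of_faithful (R : finType) (M : Type) (act : R -> M -> M) :
  faithful act -> 1 < #|R| -> ~ quasitrivial act.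
Proof.
move=> faithM R_gt1 qt.
have const_inj : injective (fun _ : R => tt) by move=> r s _; apply: faithM => x; apply: qt.
by have := leq_card _ const_inj; rewrite card_unit leqNgt R_gt1.
Qed.

Section Irreducibility.

Variables (R : finType) (add mul : R -> R -> R).
Variables (M : finType) (addM : M -> M -> M) (act : R -> M -> M).
Hypotheses (semiringR : is_semiring add mul) (simpleR : simple_semiring add mul)
           (RR_gt1 : RR_nontrivial mul) (R_gt2 : 2 < #|R|)
           (semimodM : is_semimodule add mul addM act)
           (smallestM : faithful_smallest add mul addM act).

Lemma act_separates x y : (forall t, act t x = act t y) -> x = y.
Proof.
have [faithM _] := smallestM; have [_ _ actA _ actDr] := semimodM.
pose ann a b := forall t, act t a = act t b.
have ann_cong : semimodule_congruence addM act ann.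
  split; first by split=> [a t | a b E t | a b c E F t]; rewrite ?E ?F.
  by split=> [a b c d E F t | r a b E t]; rewrite ?actDr ?actA E ?F.
have [ann_id | ann_nid] := pselect (forall a b, ann a b <-> a = b); first by move/ann_id.
have qt := nontrivial_congruence_quasitrivial simpleR semimodM smallestM ann_cong ann_nid.
suff: #|R| <= 2 by rewrite leqNgt R_gt2.
apply: card_le2_of_mul_left_constant semiringR simpleR _ RR_gt1 => t r s.
by apply: faithM => a; rewrite -!actA; apply: qt.
Qed.

Lemma proper_subsemimodule_fixed (S : M -> Prop) :
  subsemimodule addM act S -> (exists z, ~ S z) -> forall r x, S x -> act r x = x.
Proof.
move=> subS S_proper r x Sx; have [_ _ actA _ _] := semimodM.
apply: act_separates => t; rewrite actA.
exact: (proper_subsemimodule_quasitrivial simpleR semimodM smallestM subS S_proper (mul t r) t Sx).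
Qed.

Lemma nontrivial_congruence_act_self (cong : M -> M -> Prop) :
  semimodule_congruence addM act cong -> ~ (forall x y, cong x y <-> x = y) ->
  forall r x, cong (act r x) x.
Proof.
move=> congM cong_nid; have [faithM _] := smallestM.
have [_ _ actA _ actDr] := semimodM; have [_ [congD _]] := congM.
have qt := nontrivial_congruence_quasitrivial simpleR semimodM smallestM congM cong_nid.
pose S x := forall r, cong (act r x) x.
have S_act s x : S (act s x) by move=> r; rewrite actA; apply: qt.
have [S_full | /existsNP [z Sz]] := pselect (forall x, S x); first by move=> r x; apply: S_full.
have /card_gt0P [r0 _] : 0 < #|R| by apply: leq_trans R_gt2.
have subS : subsemimodule addM act S.
  split; first by exists (act r0 z).
    by move=> x y Sx Sy r; rewrite actDr; apply: congD.
  by move=> r x _; apply: S_act.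
have fixS := proper_subsemimodule_fixed subS (ex_intro _ z Sz).
suff: #|R| <= 2 by rewrite leqNgt R_gt2.
apply: card_le2_of_projection semiringR simpleR _; right=> r s.
by apply: faithM => x; rewrite -actA fixS.
Qed.

Lemma nontrivial_congruence_full (cong : M -> M -> Prop) :
  semimodule_congruence addM act cong -> ~ (forall x y, cong x y <-> x = y) ->
  forall x y, cong x y.
Proof.
move=> congM cong_nid; have [[cong_refl cong_sym cong_trans] [congD _]] := congM.
have act_self := nontrivial_congruence_act_self congM cong_nid.
have /card_gt0P [r0 _] : 0 < #|R| by apply: leq_trans R_gt2.
have cong_addss x : cong (addM x x) x.
  have [_ _ _ actDl _] := semimodM.
  apply: cong_trans (act_self (add r0 r0) x); rewrite actDl.
  by apply: cong_sym; apply: congD; apply: act_self.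
apply: contrapT => /existsNP [x /existsNP [y not_xy]].
apply: (not_quasitrivial_of_faithful smallestM.1 (ltnW R_gt2)) => r s z.
have class_sub : subsemimodule addM act (cong z).
  split; first by exists z.
    by move=> a b za zb; apply: cong_trans (cong_sym _ _ (cong_addss z)) (congD _ _ _ _ za zb).
  by move=> t a za; apply: cong_trans za (cong_sym _ _ (act_self t a)).
have class_proper : exists w, ~ cong z w.
  apply: contrapT => /forallNP all_z; apply: not_xy.
  by apply: cong_trans (cong_sym _ _ (contrapT (all_z x))) (contrapT (all_z y)).
by rewrite !(proper_subsemimodule_fixed class_sub class_proper _ (cong_refl z)).
Qed.

End Irreducibility.

Theorem proposition2p14 (R : finType) (add mul : R -> R -> R)
    (M : finType) (addM : M -> M -> M) (act : R -> M -> M) :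
  is_semiring add mul -> simple_semiring add mul ->
  RR_nontrivial mul -> 2 < #|R| ->
  is_semimodule add mul addM act ->
  faithful_smallest add mul addM act ->
  irreducible addM act.
Proof.
move=> semiringR simpleR RR_gt1 R_gt2 semimodM smallestM.
have not_qt := not_quasitrivial_of_faithful smallestM.1 (ltnW R_gt2).
split; split=> //.
  exact: (proper_subsemimodule_fixed semiringR simpleR RR_gt1 R_gt2 semimodM smallestM).
move=> cong congM; have [cong_id | cong_nid] := pselect (forall x y, cong x y <-> x = y).
  by left.
by right; apply: (nontrivial_congruence_full semiringR simpleR RR_gt1 R_gt2 semimodM smallestM).
Qed.
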